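(* Let $V$ be a real vector space endowed with some topology and $X$ a convex cone in $V$. Suppose $w\in\mathbb{R}$, $f\in P_X$, and $u:X\to\mathbb{R}$ is a locally nonsatiated function. If $C\subseteq X$ is a cone in $V$ and $u$ is $C$-antichain-quasiconcave, then $\arg\max_{x\in B^w_{f,X}}u(x)$ is a convex $C$-antichain included in $\operatorname{bd}(F^w_f)$.
   Context: A cone in $V$ is a subset $K$ with $\lambda K\subseteq K$ for all $\lambda>0$ (possibly empty, need not contain $0$). $V^*$ denotes the continuous linear functionals on $V$; $P_X=\{f\in V^*: f(x)>0\text{ for all }x\in X\setminus\{0\}\}$; $F^w_f=\{v\in V:f(v)\le w\}$, $B^w_{f,X}=F^w_f\cap X$; $\operatorname{bd}$ is the topological boundary. A set $A$ is $C$-antichain-convex iff for all $x,y\in A$, $\lambda\in[0,1]$ with $y-x\notin C\cup(-C)$, $\lambda x+(1-\lambda)y\in A$; $A$ is a $C$-antichain iff for all distinct $x,y\in A$, $y-x\notin C\cup(-C)$. $u$ is $C$-antichain-quasiconcave iff $\{x\in X:u(x)\ge\lambda\}$ is $C$-antichain-convex for every $\lambda\in\mathbb{R}$; $u$ is locally nonsatiated iff $x\in\operatorname{cl}(\{y\in X:u(y)>u(x)\})$ for all $x\in X$ (closure in $V$). *)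

From HB Require Import structures.
From mathcomp Require Import all_boot all_order all_algebra.
From mathcomp Require Import all_classical all_reals all_analysis.
Set Implicit Arguments. Unset Strict Implicit. Unset Printing Implicit Defensive.
Import Order.TTheory GRing.Theory Num.Theory.
Local Open Scope classical_set_scope.
Local Open Scope ring_scope.

(* V is a real vector space
   (lmodType over R : realType) endowed with an ARBITRARY topology, given
   explicitly as its family [op] of open sets (no compatibility with the
   linear structure is assumed, as in the paper). *)

Section Defs.
Context {R : realType} {V : lmodType R}.

Record topology_on (op : set (set V)) : Prop := {
  top_setT : op setT;
  top_setI : forall A B, op A -> op B -> op (A `&` B);
  top_bigcup : forall F : set (set V), F `<=` op -> op (\bigcup_(A in F) A) }.

Definition t_interior (op : set (set V)) (A : set V) : set V :=
  [set x | exists U, [/\ op U, U x & U `<=` A]].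
Definition t_closure (op : set (set V)) (A : set V) : set V :=
  [set x | forall U, op U -> U x -> U `&` A !=set0].
Definition t_boundary (op : set (set V)) (A : set V) : set V :=
  t_closure op A `\` t_interior op A.

Definition t_continuous (op : set (set V)) (f : V -> R) : Prop :=
  forall O : set R^o, open O -> op (f @^-1` O).

(* cone: lambda K ⊆ K for all lambda > 0 (may be empty, need not contain 0) *)
Definition cone (K : set V) : Prop :=
  forall l : R, 0 < l -> forall x, K x -> K (l *: x).

Definition in_P (op : set (set V)) (X : set V) (f : {scalar V}) : Prop :=
  t_continuous op f /\ forall x, X x -> x <> 0 -> 0 < f x.

Definition F_set (f : V -> R) (w : R) : set V := [set v | f v <= w].
Definition B_set (f : V -> R) (w : R) (X : set V) : set V := F_set f w `&` X.

Definition antichain_convex (C A : set V) : Prop :=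
  forall x y (l : R), A x -> A y -> 0 <= l <= 1 ->
    ~ (C (y - x) \/ C (x - y)) -> A (l *: x + (1 - l) *: y).

Definition antichain (C A : set V) : Prop :=
  forall x y, A x -> A y -> x <> y -> ~ (C (y - x) \/ C (x - y)).

Definition antichain_quasiconcave (C X : set V) (u : V -> R) : Prop :=
  forall l : R, antichain_convex C [set x | X x /\ l <= u x].

(* u : X -> R is modelled by u : V -> R, only its values on X matter *)
Definition locally_nonsatiated (op : set (set V)) (X : set V) (u : V -> R)
  : Prop :=
  forall x, X x -> t_closure op [set y | X y /\ u x < u y] x.

Definition argmax (A : set V) (u : V -> R) : set V :=
  [set x | A x /\ forall y, A y -> u y <= u x].

End Defs.

From HB Require Import structures.
From mathcomp Require Import all_boot all_order all_algebra.
From mathcomp Require Import all_classical all_reals all_analysis.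
Import Order.TTheory GRing.Theory Num.Theory.
Local Open Scope classical_set_scope.
Local Open Scope ring_scope.
Local Open Scope convex_scope.

(* Local nonsatiation forbids a maximiser in the interior of the budget set
   F^w_f, so every maximiser lies on its boundary.  If two maximisers x, y
   were C-comparable, say y - x in C \ {0} (a subset of X), then f x < f y <= w
   by positivity of f, and continuity of f would put x in the interior.
   Hence the maximisers form a C-antichain, and C-antichain-quasiconcavity
   (on the level set {u >= max u}) together with convexity of F^w_f makes the
   set of maximisers convex. *)

Section ArgmaxBudget.
Context {R : realType} {V : lmodType R}.

Lemma F_set_convex (f : {scalar V}) (w : R) :
  convex_set (F_set f w : set (convex_lmodType V)).
Proof.
move=> x y l; rewrite !inE /F_set /= => fx fy.
change (f (l%:num *: x + (1 - l%:num) *: y) <= w).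
rewrite linearD !linearZ /=.
have -> : w = l%:num * w + (1 - l%:num) * w by rewrite -mulrDl addrC subrK mul1r.
by apply: lerD; apply: ler_wpM2l.
Qed.

Lemma t_interior_F_set_lt {op : set (set V)} {f : V -> R} {w : R} {x : V} :
  t_continuous op f -> f x < w -> t_interior op (F_set f w) x.
Proof.
move=> fcont fxw; exists (f @^-1` [set r : R^o | r < w]); split => //.
- by apply: fcont; exact: open_lt.
- by move=> y /= /ltW.
Qed.

Lemma argmax_setI_boundary {op : set (set V)} {A X : set V} {u : V -> R} :
  locally_nonsatiated op X u -> argmax (A `&` X) u `<=` t_boundary op A.
Proof.
move=> hu x [[Ax Xx] xmax]; split; first by move=> U _ Ux; exists x.
case=> U [oU Ux UA].
have [y [Uy [Xy uxy]]] := hu x Xx U oU Ux.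
by have := xmax y (conj (UA y Uy) Xy); rewrite leNgt uxy.
Qed.

Lemma boundary_F_set_antichain {op : set (set V)} {f : {scalar V}} {w : R}
    {C M : set V} :
  t_continuous op f -> (forall c, C c -> c <> 0 -> 0 < f c) ->
  M `<=` F_set f w -> M `<=` t_boundary op (F_set f w) -> antichain C M.
Proof.
move=> fcont fpos MF Mbd.
suff notC x y : M x -> M y -> x <> y -> ~ C (y - x).
  by move=> x y Mx My xy [|]; [exact: notC | apply: notC => //; exact: nesym].
move=> Mx My xy Cyx.
have yx_neq0 : y - x <> 0 by move/eqP; rewrite subr_eq0 => /eqP/esym.
have := fpos _ Cyx yx_neq0; rewrite linearB subr_gt0 => fxy.
have [_] := Mbd x Mx; apply; apply: t_interior_F_set_lt => //.
exact: lt_le_trans fxy (MF y My).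
Qed.

Lemma argmax_convex {A X C : set V} {u : V -> R} :
  convex_set (A : set (convex_lmodType V)) ->
  antichain C (argmax (A `&` X) u) -> antichain_quasiconcave C X u ->
  convex_set (argmax (A `&` X) u : set (convex_lmodType V)).
Proof.
move=> Aconv ac hq x y l; rewrite !inE => xM yM.
have [->|xy] := eqVneq x y; first by rewrite convmm.
have nC := ac x y xM yM (elimN eqP xy).
case: xM => [[Ax Xx] xmax]; case: yM => [[Ay Xy] ymax].
have uxy : u x <= u y by rewrite (ymax x) // xmax.
have l01 : 0 <= l%:num <= 1 by rewrite ge0 le1.
have [Xz uz] := hq (u x) x y (l%:num) (conj Xx (lexx _)) (conj Xy uxy) l01 nC.
have Az : A (x <| l |> y) by have := Aconv x y l; rewrite !inE; exact.
split; first by split.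
by move=> z Bz; apply: le_trans uz; exact: xmax.
Qed.

End ArgmaxBudget.

Theorem theorem14 (R : realType) (V : lmodType R) (op : set (set V))
  (top : topology_on op) (X : set V) (hXcone : cone X)
  (hXconv : convex_set (X : set (convex_lmodType V)))
  (w : R) (f : {scalar V}) (hf : in_P op X f) (u : V -> R)
  (hu : locally_nonsatiated op X u) (C : set V) (hCX : C `<=` X)
  (hC : cone C) (hq : antichain_quasiconcave C X u) :
  convex_set (argmax (B_set f w X) u : set (convex_lmodType V)) /\
  antichain C (argmax (B_set f w X) u) /\
  argmax (B_set f w X) u `<=` t_boundary op (F_set f w).
Proof.
case: hf => fcont fpos.
have bd : argmax (B_set f w X) u `<=` t_boundary op (F_set f w).
  exact: argmax_setI_boundary.
have ac : antichain C (argmax (B_set f w X) u).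
  apply: (boundary_F_set_antichain fcont _ _ bd).
  - by move=> c /hCX; exact: fpos.
  - by move=> x [[]].
split; last by split.
exact: argmax_convex (F_set_convex f w) ac hq.
Qed.
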